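(* Let $\mathbf K$ be an M$\Delta$C generated as a thick subcategory by a single object $G$. If $A\in\mathbf K$ and $V(A)=V(\mathcal S_1)\sqcup V(\mathcal S_2)$ (disjoint union) for collections of objects $\mathcal S_1,\mathcal S_2$, then there exist objects $A_1,A_2\in\mathbf K$ with $V(\mathcal S_i)=V(A_i)$ for $i=1,2$.
   Context: M$\Delta$C: triangulated category with monoidal structure $(\otimes,\mathbf 1)$, $\otimes$ exact in each variable. Prime ideal: proper thick two-sided ideal $\mathbf P$ with $\mathbf I\otimes\mathbf J\subseteq\mathbf P\Rightarrow\mathbf I\subseteq\mathbf P$ or $\mathbf J\subseteq\mathbf P$ for thick ideals. $\operatorname{Spc}\mathbf K$: set of primes; $V(A)=\{\mathbf P:A\notin\mathbf P\}$ and $V(\mathcal S)=\bigcap_{A\in\mathcal S}V(A)$. *)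

Set Implicit Arguments.

Record AddCat := {
  Obj : Type;
  Hom : Obj -> Obj -> Type;
  comp : forall {X Y Z : Obj}, Hom Y Z -> Hom X Y -> Hom X Z;
  idm : forall X : Obj, Hom X X;
  comp_assoc : forall X Y Z W (f : Hom X Y) (g : Hom Y Z) (h : Hom Z W),
      comp h (comp g f) = comp (comp h g) f;
  comp_id_l : forall X Y (f : Hom X Y), comp (idm Y) f = f;
  comp_id_r : forall X Y (f : Hom X Y), comp f (idm X) = f;
  hadd : forall {X Y : Obj}, Hom X Y -> Hom X Y -> Hom X Y;
  hzero : forall X Y : Obj, Hom X Y;
  hopp : forall {X Y : Obj}, Hom X Y -> Hom X Y;
  hadd_assoc : forall X Y (f g h : Hom X Y), hadd f (hadd g h) = hadd (hadd f g) h;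
  hadd_comm : forall X Y (f g : Hom X Y), hadd f g = hadd g f;
  hadd_0 : forall X Y (f : Hom X Y), hadd f (hzero X Y) = f;
  hadd_opp : forall X Y (f : Hom X Y), hadd f (hopp f) = hzero X Y;
  comp_addl : forall X Y Z (g g' : Hom Y Z) (f : Hom X Y),
      comp (hadd g g') f = hadd (comp g f) (comp g' f);
  comp_addr : forall X Y Z (g : Hom Y Z) (f f' : Hom X Y),
      comp g (hadd f f') = hadd (comp g f) (comp g f');
  zobj : Obj;
  zobj_init : forall X (f : Hom zobj X), f = hzero zobj X;
  zobj_term : forall X (f : Hom X zobj), f = hzero X zobj;
  biprod : Obj -> Obj -> Obj;
  bi_in1 : forall X Y, Hom X (biprod X Y);
  bi_in2 : forall X Y, Hom Y (biprod X Y);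
  bi_pr1 : forall X Y, Hom (biprod X Y) X;
  bi_pr2 : forall X Y, Hom (biprod X Y) Y;
  bi_11 : forall X Y, comp (bi_pr1 X Y) (bi_in1 X Y) = idm X;
  bi_22 : forall X Y, comp (bi_pr2 X Y) (bi_in2 X Y) = idm Y;
  bi_12 : forall X Y, comp (bi_pr1 X Y) (bi_in2 X Y) = hzero Y X;
  bi_21 : forall X Y, comp (bi_pr2 X Y) (bi_in1 X Y) = hzero X Y;
  bi_sum : forall X Y, hadd (comp (bi_in1 X Y) (bi_pr1 X Y))
                            (comp (bi_in2 X Y) (bi_pr2 X Y)) = idm (biprod X Y)
}.

Arguments comp {a X Y Z} _ _.
Arguments idm {a} X.
Arguments hadd {a X Y} _ _.
Arguments hzero {a} X Y.
Arguments hopp {a X Y} _.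
Arguments zobj {a}.
Arguments biprod {a} _ _.

Definition is_iso (C : AddCat) (X Y : Obj C) (f : Hom C X Y) : Prop :=
  exists g : Hom C Y X, comp g f = idm X /\ comp f g = idm Y.
Arguments is_iso {C X Y} f.

Definition isomorphic (C : AddCat) (X Y : Obj C) : Prop :=
  exists f : Hom C X Y, is_iso f.
Arguments isomorphic {C} X Y.

Record TriCat := {
  tc_add :> AddCat;
  Sh : Obj tc_add -> Obj tc_add;
  shm : forall {X Y : Obj tc_add}, Hom tc_add X Y -> Hom tc_add (Sh X) (Sh Y);
  shm_id : forall X, shm (idm X) = idm (Sh X);
  shm_comp : forall X Y Z (g : Hom tc_add Y Z) (f : Hom tc_add X Y),
      shm (comp g f) = comp (shm g) (shm f);
  shm_add : forall X Y (f g : Hom tc_add X Y), shm (hadd f g) = hadd (shm f) (shm g);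
  shm_inj : forall X Y (f g : Hom tc_add X Y), shm f = shm g -> f = g;
  shm_surj : forall X Y (g : Hom tc_add (Sh X) (Sh Y)), exists f, shm f = g;
  Sh_esurj : forall Y, exists X, isomorphic (Sh X) Y;
  dist : forall {X Y Z : Obj tc_add},
      Hom tc_add X Y -> Hom tc_add Y Z -> Hom tc_add Z (Sh X) -> Prop;
  TR1_iso : forall X Y Z X' Y' Z'
      (f : Hom tc_add X Y) (g : Hom tc_add Y Z) (h : Hom tc_add Z (Sh X))
      (f' : Hom tc_add X' Y') (g' : Hom tc_add Y' Z') (h' : Hom tc_add Z' (Sh X'))
      (a : Hom tc_add X X') (b : Hom tc_add Y Y') (c : Hom tc_add Z Z'),
      is_iso a -> is_iso b -> is_iso c ->
      comp b f = comp f' a -> comp c g = comp g' b -> comp (shm a) h = comp h' c ->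
      dist f g h -> dist f' g' h';
  TR1_id : forall X, dist (idm X) (hzero X zobj) (hzero zobj (Sh X));
  TR1_ext : forall X Y (f : Hom tc_add X Y),
      exists Z (g : Hom tc_add Y Z) (h : Hom tc_add Z (Sh X)), dist f g h;
  TR2 : forall X Y Z (f : Hom tc_add X Y) (g : Hom tc_add Y Z) (h : Hom tc_add Z (Sh X)),
      dist f g h <-> dist g h (hopp (shm f));
  TR3 : forall X Y Z X' Y' Z'
      (f : Hom tc_add X Y) (g : Hom tc_add Y Z) (h : Hom tc_add Z (Sh X))
      (f' : Hom tc_add X' Y') (g' : Hom tc_add Y' Z') (h' : Hom tc_add Z' (Sh X'))
      (a : Hom tc_add X X') (b : Hom tc_add Y Y'),
      dist f g h -> dist f' g' h' -> comp b f = comp f' a ->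
      exists c : Hom tc_add Z Z', comp c g = comp g' b /\ comp (shm a) h = comp h' c;
  TR4 : forall X Y Z Z' X' Y'
      (f : Hom tc_add X Y) (g : Hom tc_add Y Z)
      (u1 : Hom tc_add Y Z') (d1 : Hom tc_add Z' (Sh X))
      (u2 : Hom tc_add Z X') (d2 : Hom tc_add X' (Sh Y))
      (u3 : Hom tc_add Z Y') (d3 : Hom tc_add Y' (Sh X)),
      dist f u1 d1 -> dist g u2 d2 -> dist (comp g f) u3 d3 ->
      exists (a : Hom tc_add Z' Y') (b : Hom tc_add Y' X'),
        dist a b (comp (shm u1) d2) /\
        comp a u1 = comp u3 g /\ comp d3 a = d1 /\
        comp b u3 = u2 /\ comp d2 b = comp (shm f) d3
}.

Arguments Sh {t} _.
Arguments shm {t X Y} _.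
Arguments dist {t X Y Z} _ _ _.

Record MDC := {
  m_tri :> TriCat;
  tens : Obj m_tri -> Obj m_tri -> Obj m_tri;
  tm : forall {X X' Y Y' : Obj m_tri},
      Hom m_tri X X' -> Hom m_tri Y Y' -> Hom m_tri (tens X Y) (tens X' Y');
  tm_id : forall X Y, tm (idm X) (idm Y) = idm (tens X Y);
  tm_comp : forall X X' X'' Y Y' Y''
      (f : Hom m_tri X X') (f' : Hom m_tri X' X'') (g : Hom m_tri Y Y') (g' : Hom m_tri Y' Y''),
      tm (comp f' f) (comp g' g) = comp (tm f' g') (tm f g);
  tm_addl : forall X X' Y Y' (f f' : Hom m_tri X X') (g : Hom m_tri Y Y'),
      tm (hadd f f') g = hadd (tm f g) (tm f' g);
  tm_addr : forall X X' Y Y' (f : Hom m_tri X X') (g g' : Hom m_tri Y Y'),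
      tm f (hadd g g') = hadd (tm f g) (tm f g');
  unit : Obj m_tri;
  assoc : forall X Y Z, Hom m_tri (tens (tens X Y) Z) (tens X (tens Y Z));
  assoc_iso : forall X Y Z, is_iso (assoc X Y Z);
  assoc_nat : forall X X' Y Y' Z Z'
      (f : Hom m_tri X X') (g : Hom m_tri Y Y') (h : Hom m_tri Z Z'),
      comp (tm f (tm g h)) (assoc X Y Z) = comp (assoc X' Y' Z') (tm (tm f g) h);
  lunit : forall X, Hom m_tri (tens unit X) X;
  lunit_iso : forall X, is_iso (lunit X);
  lunit_nat : forall X X' (f : Hom m_tri X X'),
      comp f (lunit X) = comp (lunit X') (tm (idm unit) f);
  runit : forall X, Hom m_tri (tens X unit) X;
  runit_iso : forall X, is_iso (runit X);
  runit_nat : forall X X' (f : Hom m_tri X X'),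
      comp f (runit X) = comp (runit X') (tm f (idm unit));
  pentagon : forall W X Y Z,
      comp (assoc W X (tens Y Z)) (assoc (tens W X) Y Z)
      = comp (tm (idm W) (assoc X Y Z))
             (comp (assoc W (tens X Y) Z) (tm (assoc W X Y) (idm Z)));
  triangle : forall X Y,
      comp (tm (idm X) (lunit Y)) (assoc X unit Y) = tm (runit X) (idm Y);
  (* exactness of ⊗ in each variable *)
  thR : forall X Y, Hom m_tri (tens X (Sh Y)) (Sh (tens X Y));
  thR_iso : forall X Y, is_iso (thR X Y);
  thR_nat : forall X X' Y Y' (f : Hom m_tri X X') (g : Hom m_tri Y Y'),
      comp (shm (tm f g)) (thR X Y) = comp (thR X' Y') (tm f (shm g));
  thR_dist : forall W X Y Z (f : Hom m_tri X Y) (g : Hom m_tri Y Z) (h : Hom m_tri Z (Sh X)),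
      dist f g h ->
      dist (tm (idm W) f) (tm (idm W) g) (comp (thR W X) (tm (idm W) h));
  thL : forall X Y, Hom m_tri (tens (Sh X) Y) (Sh (tens X Y));
  thL_iso : forall X Y, is_iso (thL X Y);
  thL_nat : forall X X' Y Y' (f : Hom m_tri X X') (g : Hom m_tri Y Y'),
      comp (shm (tm f g)) (thL X Y) = comp (thL X' Y') (tm (shm f) g);
  thL_dist : forall W X Y Z (f : Hom m_tri X Y) (g : Hom m_tri Y Z) (h : Hom m_tri Z (Sh X)),
      dist f g h ->
      dist (tm f (idm W)) (tm g (idm W)) (comp (thL X W) (tm h (idm W)))
}.

Arguments tens {m} _ _.

Section Spc.
Variable K : MDC.

(* a (full, replete) thick subcategory, given by its class of objects *)
Definition thick (P : Obj K -> Prop) : Prop :=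
  P zobj /\
  (forall X Y : Obj K, isomorphic X Y -> P X -> P Y) /\
  (forall X : Obj K, P X <-> P (Sh X)) /\
  (forall (X Y Z : Obj K) (f : Hom K X Y) (g : Hom K Y Z) (h : Hom K Z (Sh X)),
      dist f g h ->
      (P X -> P Y -> P Z) /\ (P Y -> P Z -> P X) /\ (P X -> P Z -> P Y)) /\
  (forall X Y : Obj K, P (biprod X Y) -> P X).

Definition thick_ideal (P : Obj K -> Prop) : Prop :=
  thick P /\ forall X Y : Obj K, P X -> P (tens X Y) /\ P (tens Y X).

Definition prime_ideal (P : Obj K -> Prop) : Prop :=
  thick_ideal P /\ (exists X, ~ P X) /\
  forall I J : Obj K -> Prop, thick_ideal I -> thick_ideal J ->
    (forall a b, I a -> J b -> P (tens a b)) ->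
    (forall a, I a -> P a) \/ (forall b, J b -> P b).

Definition V (A : Obj K) (P : Obj K -> Prop) : Prop := prime_ideal P /\ ~ P A.
Definition VS (S : Obj K -> Prop) (P : Obj K -> Prop) : Prop :=
  prime_ideal P /\ forall A, S A -> ~ P A.

Definition thick_generator (G : Obj K) : Prop :=
  forall P : Obj K -> Prop, thick P -> P G -> forall X, P X.

End Spc.

Arguments thick {K} P.
Arguments thick_ideal {K} P.
Arguments prime_ideal {K} P.
Arguments V {K} A P.
Arguments VS {K} S P.
Arguments thick_generator {K} G.

(* Call [m] split when V(m) = V(a1) ∩ V(a2) for objects a1, a2 with V(S1) ⊆ V(a1)
   and V(S2) ⊆ V(a2).  As G generates, V((x ⊗ G) ⊗ y) = V(x) ∩ V(y); hence G and all
   members of S1 and S2 are split, and split objects are closed under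
   (x, y) ↦ (x ⊗ G) ⊗ y.  If no split object lay in every prime, a thick ideal maximal
   among those containing no split object (Zorn) would be prime, hence in
   V(S1) ∩ V(S2) = ∅.  So some split m has V(m) = ∅: then V(a1) and V(a2) are disjoint
   and A_i := (A ⊗ G) ⊗ a_i has V(A_i) = V(A) ∩ V(a_i) = V(S_i). *)

From mathcomp Require Import ssreflect ssrfun ssrbool boolp classical_sets.

Set Implicit Arguments.
Unset Strict Implicit.

Local Open Scope classical_set_scope.

Lemma Zorn_above (T : Type) (P : set (set T)) (B : set T) :
  P B ->
  (forall F : set (set T), F `<=` P -> total_on F subset -> F B ->
     P (\bigcup_(X in F) X)) ->
  exists M, [/\ P M, B `<=` M & forall N, P N -> M `<=` N -> N `<=` M].
Proof.
move=> PB Pchain.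
have [|M0 [PM0 maxM0]] := @Zorn_bigcup T (fun X => P (B `|` X)).
  move=> F FP Ftot; pose F' := [set B] `|` [set B `|` X | X in F].
  have -> : B `|` \bigcup_(X in F) X = \bigcup_(Y in F') Y.
    apply/seteqP; split=> [t [Bt|[X FX Xt]]|t [Y [->|[X FX <-]] Yt]].
    - by exists B => //; left.
    - by exists (B `|` X); [right; exists X|right].
    - by left.
    - by case: Yt => [Bt|Xt]; [left|right; exists X].
  apply: Pchain => [Y [->|[X FX <-]]||]; [exact: PB|exact: FP|idtac|by left].
  move=> Y Z [->|[X FX <-]] [->|[X' FX' <-]].
  - by left.
  - by left; apply: subsetUl.
  - by right; apply: subsetUl.
  - by case: (Ftot _ _ FX FX') => XX'; [left|right]; apply: setUS.
exists (B `|` M0); split=> [//||N PN M0N]; first exact: subsetUl.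
have NM0 : N `<=` M0.
  apply: contrapT => nNM0; apply: (maxM0 N).
    by split=> [t M0t|//]; apply: M0N; right.
  by rewrite (setUidPr _ _).2 // => t Bt; apply: M0N; left.
by move=> t /NM0 M0t; right.
Qed.

Section Additive.
Variable C : AddCat.

Lemma hadd_idem_zero (X Y : Obj C) (f : Hom C X Y) : hadd f f = f -> f = hzero X Y.
Proof.
move=> ff; rewrite -(hadd_opp _ _ _ f) -{2}ff -hadd_assoc hadd_opp.
by rewrite hadd_0.
Qed.

Lemma comp_zero_r (X Y Z : Obj C) (g : Hom C Y Z) : comp g (hzero X Y) = hzero X Z.
Proof. by apply: hadd_idem_zero; rewrite -comp_addr hadd_0. Qed.

Lemma comp_zero_l (X Y Z : Obj C) (f : Hom C X Y) : comp (hzero Y Z) f = hzero X Z.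
Proof. by apply: hadd_idem_zero; rewrite -comp_addl hadd_0. Qed.

Lemma hadd_0l (X Y : Obj C) (f : Hom C X Y) : hadd (hzero X Y) f = f.
Proof. by rewrite hadd_comm hadd_0. Qed.

Lemma isomorphic_sym (X Y : Obj C) : isomorphic X Y -> isomorphic Y X.
Proof. by case=> f [g [gf fg]]; exists g, f. Qed.

Lemma isomorphic_trans (X Y Z : Obj C) :
  isomorphic X Y -> isomorphic Y Z -> isomorphic X Z.
Proof.
case=> f [f' [f'f ff']] [g [g' [g'g gg']]].
exists (comp g f), (comp f' g'); split.
- by rewrite comp_assoc -(comp_assoc _ _ _ _ _ g) g'g comp_id_r.
- by rewrite comp_assoc -(comp_assoc _ _ _ _ _ f') ff' comp_id_r.
Qed.

Lemma isomorphic_zobj (X : Obj C) : idm X = hzero X X -> isomorphic X zobj.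
Proof.
move=> X0; exists (hzero X zobj), (hzero zobj X); split.
  by rewrite comp_zero_l X0.
by rewrite (zobj_init _ _ (idm zobj)); apply: zobj_init.
Qed.

Lemma isomorphic_biprod (Z X Y : Obj C)
    (i1 : Hom C X Z) (i2 : Hom C Y Z) (p1 : Hom C Z X) (p2 : Hom C Z Y) :
  comp p1 i1 = idm X -> comp p2 i2 = idm Y ->
  comp p1 i2 = hzero Y X -> comp p2 i1 = hzero X Y ->
  hadd (comp i1 p1) (comp i2 p2) = idm Z -> isomorphic Z (biprod X Y).
Proof.
move=> e11 e22 e12 e21 esum.
exists (hadd (comp (bi_in1 C X Y) p1) (comp (bi_in2 C X Y) p2)).
exists (hadd (comp i1 (bi_pr1 C X Y)) (comp i2 (bi_pr2 C X Y))).
have reassoc (W U V R S : Obj C) (a : Hom C V W) (b : Hom C U V) (c : Hom C R U)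
    (d : Hom C S R) : comp (comp a b) (comp c d) = comp a (comp (comp b c) d).
  by rewrite -comp_assoc (comp_assoc _ _ _ _ _ d).
rewrite !comp_addl !comp_addr !reassoc bi_11 bi_22 bi_12 bi_21 e11 e22 e12 e21.
rewrite !comp_zero_l !comp_zero_r !comp_id_l hadd_0 hadd_0l hadd_0 hadd_0l.
by split=> //; apply: bi_sum.
Qed.

End Additive.

Section AdditiveFunctor.
Variables (K L : AddCat) (F : Obj K -> Obj L).
Variable Fm : forall X Y : Obj K, Hom K X Y -> Hom L (F X) (F Y).
Arguments Fm {X Y}.
Hypothesis Fm_id : forall X, Fm (idm X) = idm (F X).
Hypothesis Fm_comp : forall X Y Z (f : Hom K X Y) (g : Hom K Y Z),
  Fm (comp g f) = comp (Fm g) (Fm f).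
Hypothesis Fm_add : forall X Y (f g : Hom K X Y), Fm (hadd f g) = hadd (Fm f) (Fm g).

Lemma Fm_zero (X Y : Obj K) : Fm (hzero X Y) = hzero (F X) (F Y).
Proof. by apply: hadd_idem_zero; rewrite -Fm_add hadd_0. Qed.

Lemma isomorphic_map (X Y : Obj K) : isomorphic X Y -> isomorphic (F X) (F Y).
Proof.
case=> f [g [gf fg]]; exists (Fm f), (Fm g).
by rewrite -!Fm_comp gf fg !Fm_id.
Qed.

Lemma isomorphic_map_zobj : isomorphic (F zobj) zobj.
Proof. by apply: isomorphic_zobj; rewrite -Fm_id (zobj_init _ _ (idm zobj)) Fm_zero. Qed.

Lemma isomorphic_map_biprod (X Y : Obj K) :
  isomorphic (F (biprod X Y)) (biprod (F X) (F Y)).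
Proof.
apply: (@isomorphic_biprod _ _ _ _ (Fm (bi_in1 K X Y)) (Fm (bi_in2 K X Y))
                                   (Fm (bi_pr1 K X Y)) (Fm (bi_pr2 K X Y))).
- by rewrite -Fm_comp bi_11 Fm_id.
- by rewrite -Fm_comp bi_22 Fm_id.
- by rewrite -Fm_comp bi_12 Fm_zero.
- by rewrite -Fm_comp bi_21 Fm_zero.
- by rewrite -!Fm_comp -Fm_add bi_sum Fm_id.
Qed.

End AdditiveFunctor.

Section ExactFunctor.
Variables (K L : MDC) (F : Obj K -> Obj L).
Variable Fm : forall X Y : Obj K, Hom K X Y -> Hom L (F X) (F Y).
Arguments Fm {X Y}.
Hypothesis Fm_id : forall X, Fm (idm X) = idm (F X).
Hypothesis Fm_comp : forall X Y Z (f : Hom K X Y) (g : Hom K Y Z),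
  Fm (comp g f) = comp (Fm g) (Fm f).
Hypothesis Fm_add : forall X Y (f g : Hom K X Y), Fm (hadd f g) = hadd (Fm f) (Fm g).
Hypothesis F_shift : forall X, isomorphic (F (Sh X)) (Sh (F X)).
Hypothesis Fm_dist : forall X Y Z (f : Hom K X Y) (g : Hom K Y Z) (h : Hom K Z (Sh X)),
  dist f g h -> exists h' : Hom L (F Z) (Sh (F X)), dist (Fm f) (Fm g) h'.

Lemma thick_preimage (P : Obj L -> Prop) : thick P -> thick (fun X => P (F X)).
Proof.
case=> [P0 [Piso [Psh [Pdist Psum]]]].
have PFiso X Y : isomorphic X Y -> P (F X) -> P (F Y).
  by move=> /(isomorphic_map Fm_id Fm_comp); apply: Piso.
split; [|split; [exact: PFiso|split; [|split]]].
- by apply: (Piso zobj); first exact/isomorphic_sym/(isomorphic_map_zobj Fm_id Fm_add).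
- move=> X; rewrite Psh; split; apply: Piso; first exact/isomorphic_sym.
  exact: F_shift.
- by move=> X Y Z f g h /Fm_dist [h' /Pdist].
- move=> X Y /(Piso _ _ (isomorphic_map_biprod Fm_id Fm_comp Fm_add X Y)).
  exact: Psum.
Qed.

End ExactFunctor.

Section Tensor.
Variable K : MDC.

Lemma tm_comp_idl (W X Y Z : Obj K) (f : Hom K X Y) (g : Hom K Y Z) :
  tm K (idm W) (comp g f) = comp (tm K (idm W) g) (tm K (idm W) f).
Proof. by rewrite -tm_comp comp_id_l. Qed.

Lemma tm_comp_idr (W X Y Z : Obj K) (f : Hom K X Y) (g : Hom K Y Z) :
  tm K (comp g f) (idm W) = comp (tm K g (idm W)) (tm K f (idm W)).
Proof. by rewrite -tm_comp comp_id_l. Qed.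

Lemma isomorphic_tensr (W X Y : Obj K) :
  isomorphic X Y -> isomorphic (tens X W) (tens Y W).
Proof. exact: (isomorphic_map (fun X => tm_id K X W) (@tm_comp_idr W)). Qed.

Lemma isomorphic_assoc (X Y Z : Obj K) :
  isomorphic (tens (tens X Y) Z) (tens X (tens Y Z)).
Proof. by exists (assoc K X Y Z); apply: assoc_iso. Qed.

Lemma isomorphic_runit (X : Obj K) : isomorphic (tens X (unit K)) X.
Proof. by exists (runit K X); apply: runit_iso. Qed.

Lemma thick_preim_tensl (W : Obj K) (P : Obj K -> Prop) :
  thick P -> thick (fun X => P (tens W X)).
Proof.
apply: (thick_preimage (tm_id K W) (@tm_comp_idl W) (fun X Y => tm_addr K _ _ _ _ _)).
- by move=> X; exists (thR K W X); apply: thR_iso.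
- by move=> X Y Z f g h D; eexists; exact: thR_dist D.
Qed.

Lemma thick_preim_tensr (W : Obj K) (P : Obj K -> Prop) :
  thick P -> thick (fun X => P (tens X W)).
Proof.
apply: (thick_preimage (fun X => tm_id K X W) (@tm_comp_idr W)
                       (fun X Y f g => tm_addl K _ _ _ _ f g (idm W))).
- by move=> X; exists (thL K X W); apply: thL_iso.
- by move=> X Y Z f g h D; eexists; exact: thL_dist D.
Qed.

End Tensor.

Section ThickIdeals.
Variable K : MDC.
Implicit Types (P S T : Obj K -> Prop) (X Y : Obj K).

Lemma thick_ideal_iso P X Y : thick_ideal P -> isomorphic X Y -> P X -> P Y.
Proof. by case=> [[_ [Piso _]] _]; apply: Piso. Qed.

Lemma thick_ideal_tensr P X Y : thick_ideal P -> P X -> P (tens X Y).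
Proof. by case=> _ Ptens /(Ptens _ Y) []. Qed.

Lemma thick_ideal_tensl P X Y : thick_ideal P -> P X -> P (tens Y X).
Proof. by case=> _ Ptens /(Ptens _ Y) []. Qed.

Lemma thick_bigcap (A : Type) (F : A -> Obj K -> Prop) :
  (forall i, thick (F i)) -> thick (fun x => forall i, F i x).
Proof.
move=> Fthick; split; [|split; [|split; [|split]]].
- by move=> i; case: (Fthick i).
- by move=> X Y XY FX i; case: (Fthick i) => _ [Fiso _]; apply: Fiso (FX i).
- move=> X; split=> FX i; case: (Fthick i) => _ [_ [Fsh _]].
    exact: (Fsh X).1 (FX i).
  exact: (Fsh X).2 (FX i).
- move=> X Y Z f g h D.
  by split; [|split] => F1 F2 i; case: (Fthick i) => _ [_ [_ [/(_ _ _ _ _ _ _ D) [T1 [T2 T3]] _]]];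
    [apply: T1|apply: T2|apply: T3].
- by move=> X Y FXY i; case: (Fthick i) => _ [_ [_ [_ Fsum]]]; apply: Fsum (FXY i).
Qed.

Lemma thick_ideal_bigcap (A : Type) (F : A -> Obj K -> Prop) :
  (forall i, thick_ideal (F i)) -> thick_ideal (fun x => forall i, F i x).
Proof.
move=> Fideal; split; first by apply: thick_bigcap => i; case: (Fideal i).
by move=> X Y FX; split=> i; [apply: thick_ideal_tensr|apply: thick_ideal_tensl].
Qed.

Lemma thick_chain_union (F : set (Obj K -> Prop)) :
  (forall T, F T -> thick T) -> total_on F subset -> (exists T, F T) ->
  thick (\bigcup_(T in F) T).
Proof.
move=> Fthick Ftot [T0 FT0].
have join T1 T2 X Y : F T1 -> F T2 -> T1 X -> T2 Y -> exists2 T, F T & T X /\ T Y.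
  move=> FT1 FT2 T1X T2Y; case: (Ftot _ _ FT1 FT2) => T12.
    by exists T2 => //; split=> //; apply: T12.
  by exists T1 => //; split=> //; apply: T12.
split; [|split; [|split; [|split]]].
- by exists T0 => //; case: (Fthick _ FT0).
- move=> X Y XY [T FT TX]; exists T => //.
  by case: (Fthick _ FT) => _ [Tiso _]; apply: Tiso TX.
- move=> X; split=> -[T FT TX]; exists T => //; case: (Fthick _ FT) => _ [_ [Tsh _]].
    exact: (Tsh X).1.
  exact: (Tsh X).2.
- move=> X Y Z f g h D; split; [|split] => -[T1 FT1 T1u] [T2 FT2 T2v];
    have [T FT [Tu Tv]] := join _ _ _ _ FT1 FT2 T1u T2v; exists T => //;
    case: (Fthick _ FT) => _ [_ [_ [/(_ _ _ _ _ _ _ D) [Tdist1 [Tdist2 Tdist3]] _]]].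
  + exact: Tdist1.
  + exact: Tdist2.
  + exact: Tdist3.
- move=> X Y [T FT TXY]; exists T => //.
  by case: (Fthick _ FT) => _ [_ [_ [_ Tsum]]]; apply: Tsum TXY.
Qed.

Lemma thick_ideal_chain_union (F : set (Obj K -> Prop)) :
  (forall T, F T -> thick_ideal T) -> total_on F subset -> (exists T, F T) ->
  thick_ideal (\bigcup_(T in F) T).
Proof.
move=> Fideal Ftot F0; split.
  by apply: thick_chain_union => // T /Fideal [].
move=> X Y [T FT TX]; have Tideal := Fideal _ FT.
by split; exists T => //; [apply: thick_ideal_tensr|apply: thick_ideal_tensl].
Qed.

Definition ideal_gen (S : Obj K -> Prop) : Obj K -> Prop :=
  fun x => forall T, thick_ideal T -> S `<=` T -> T x.

Lemma thick_ideal_gen S : thick_ideal (ideal_gen S).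
Proof.
(* An implication [Q -> T x] is an intersection indexed by the proofs of [Q]. *)
apply: thick_ideal_bigcap => T; apply: thick_ideal_bigcap => Tideal.
exact: thick_ideal_bigcap.
Qed.

Lemma sub_ideal_gen S : S `<=` ideal_gen S.
Proof. by move=> x Sx T _; apply. Qed.

Lemma ideal_gen_min S T : thick_ideal T -> S `<=` T -> ideal_gen S `<=` T.
Proof. by move=> Tideal ST x; apply. Qed.

End ThickIdeals.

Section Sandwich.
Variable K : MDC.
Implicit Types (P I J : Obj K -> Prop).

(* [sandwich_sub I J P] says that [I ⊗ K ⊗ J ⊆ P]. *)
Definition sandwich_sub I J P : Prop :=
  forall a b c, I a -> J b -> P (tens (tens a c) b).

Definition lann P J : Obj K -> Prop :=
  fun a => forall b, J b -> forall c, P (tens (tens a c) b).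

Definition rann P I : Obj K -> Prop :=
  fun b => forall a, I a -> forall c, P (tens (tens a c) b).

Lemma thick_ideal_lann P J : thick_ideal P -> thick_ideal (lann P J).
Proof.
move=> Pideal; split.
  apply: thick_bigcap => b; apply: thick_bigcap => _; apply: thick_bigcap => c.
  by apply: (thick_preim_tensr c (P := fun y => P (tens y b))); apply: thick_preim_tensr; case: Pideal.
move=> a Y Ja; split=> b Jb c.
- apply: thick_ideal_iso Pideal _ (Ja b Jb (tens Y c)).
  exact/isomorphic_tensr/isomorphic_sym/isomorphic_assoc.
- apply: thick_ideal_iso Pideal _ (thick_ideal_tensl Y Pideal (Ja b Jb c)).
  apply/isomorphic_sym/isomorphic_trans; last exact: isomorphic_assoc.
  exact/isomorphic_tensr/isomorphic_assoc.
Qed.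

Lemma thick_ideal_rann P I : thick_ideal P -> thick_ideal (rann P I).
Proof.
move=> Pideal; split.
  apply: thick_bigcap => a; apply: thick_bigcap => _; apply: thick_bigcap => c.
  by apply: thick_preim_tensl; case: Pideal.
move=> b Y Ib; split=> a Ia c.
- apply: thick_ideal_iso Pideal _ (thick_ideal_tensr Y Pideal (Ib a Ia c)).
  exact: isomorphic_assoc.
- apply: thick_ideal_iso Pideal _ (Ib a Ia (tens c Y)).
  apply: isomorphic_trans (isomorphic_assoc _ _ _).
  exact/isomorphic_tensr/isomorphic_sym/isomorphic_assoc.
Qed.

Lemma sandwich_sub_gen P I J :
  thick_ideal P -> sandwich_sub I J P -> sandwich_sub (ideal_gen I) (ideal_gen J) P.
Proof.
move=> Pideal IJP.
have genI_lann : ideal_gen I `<=` lann P J.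
  by apply: ideal_gen_min (thick_ideal_lann J Pideal) _ => a Ia b Jb c; apply: IJP.
have genJ_rann : ideal_gen J `<=` rann P (ideal_gen I).
  by apply: ideal_gen_min (thick_ideal_rann _ Pideal) _ => b Jb a /genI_lann; apply.
by move=> a b c Ia /genJ_rann; apply.
Qed.

Lemma prime_sandwich P I J :
  prime_ideal P -> sandwich_sub I J P -> I `<=` P \/ J `<=` P.
Proof.
case=> Pideal [_ Pprime] /(sandwich_sub_gen Pideal) genIJ.
have [|genIP|genJP] := Pprime _ _ (thick_ideal_gen I) (thick_ideal_gen J).
- move=> a b Ia Jb; apply: thick_ideal_iso Pideal _ (genIJ a b (unit K) Ia Jb).
  exact/isomorphic_tensr/isomorphic_runit.
- by left=> a /sub_ideal_gen /genIP.
- by right=> b /sub_ideal_gen /genJP.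
Qed.

End Sandwich.

Section PrimeAvoidance.
Variable K : MDC.

Lemma exists_prime_avoiding (S I : Obj K -> Prop) :
  (exists s, S s) ->
  (forall s s', S s -> S s' -> exists c, S (tens (tens s c) s')) ->
  thick_ideal I -> (forall x, I x -> ~ S x) ->
  exists P, [/\ prime_ideal P, I `<=` P & forall x, P x -> ~ S x].
Proof.
move=> [s0 Ss0] Smul Iideal IS.
pose avoiding T := [/\ thick_ideal T, I `<=` T & forall x, T x -> ~ S x].
have [M [[Mideal IM MS] _ Mmax]] : exists M, [/\ avoiding M, I `<=` M &
    forall N, avoiding N -> M `<=` N -> N `<=` M].
  apply: Zorn_above => [|F Favoid Ftot FI]; first by split.
  split.
  - by apply: thick_ideal_chain_union => // [T /Favoid []|]; last exists I.
  - by move=> x Ix; exists I.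
  - by move=> x [T /Favoid [_ _ TS] /TS].
have meets J : thick_ideal J -> ~ J `<=` M -> exists2 s, S s & ideal_gen (M `|` J) s.
  move=> Jideal nJM; apply: contrapT => noS; apply: nJM => x Jx.
  apply: (Mmax (ideal_gen (M `|` J))); last by apply: sub_ideal_gen; right.
  - split; first exact: thick_ideal_gen.
      by move=> y /IM My; apply: sub_ideal_gen; left.
    by move=> y gy Sy; apply: noS; exists y.
  - by move=> y My; apply: sub_ideal_gen; left.
exists M; split=> //; split=> //; split; first by exists s0 => /MS; apply.
move=> J1 J2 J1ideal J2ideal J12M.
apply: contrapT => /not_orP [nJ1 nJ2].
have [s1 Ss1 gs1] := meets _ J1ideal nJ1.
have [s2 Ss2 gs2] := meets _ J2ideal nJ2.
have [c Ss] := Smul _ _ Ss1 Ss2.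
have MJM : sandwich_sub (M `|` J1) (M `|` J2) M.
  move=> a b c' MJa [Mb|J2b]; first exact: thick_ideal_tensl.
  case: MJa => [Ma|J1a]; first exact: thick_ideal_tensr _ Mideal (thick_ideal_tensr _ Mideal Ma).
  exact: J12M _ _ (thick_ideal_tensr c' J1ideal J1a) J2b.
exact: MS _ (sandwich_sub_gen Mideal MJM c gs1 gs2) Ss.
Qed.

End PrimeAvoidance.

Section Generator.
Variables (K : MDC) (G : Obj K).
Hypothesis Ggen : thick_generator G.

Lemma V_generator P : prime_ideal P -> V G P.
Proof.
move=> Pprime; split=> // PG; case: Pprime => [[Pthick _] [[x nPx] _]].
exact: nPx (Ggen Pthick PG x).
Qed.

(* If [(x ⊗ G) ⊗ y] lies in [P], so does [(x ⊗ c) ⊗ y] for every [c], as [G] generates. *)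
Lemma V_sandwich x y P : V (tens (tens x G) y) P <-> V x P /\ V y P.
Proof.
split=> [[Pprime nPxy]|[[Pprime nPx] [_ nPy]]].
  have [Pideal _] := Pprime.
  split; split=> // HP; apply: nPxy.
    exact: thick_ideal_tensr _ Pideal (thick_ideal_tensr _ Pideal HP).
  exact: thick_ideal_tensl _ Pideal HP.
split=> // Pxy; have [[Pthick _] _] := Pprime.
have xKy : sandwich_sub [set x] [set y] P.
  move=> a b c -> ->; move: c; apply: Ggen Pxy.
  exact: (thick_preim_tensl x (P := fun z => P (tens z y))) (thick_preim_tensr y Pthick).
by case: (prime_sandwich Pprime xKy) => [/(_ x erefl)|/(_ y erefl)].
Qed.

End Generator.

Section SplitSupport.
Variables (K : MDC) (G : Obj K) (S1 S2 : Obj K -> Prop).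
Hypothesis Ggen : thick_generator G.

Definition split_support (m : Obj K) : Prop :=
  exists a1 a2, [/\ forall P, V m P <-> V a1 P /\ V a2 P,
                    VS S1 `<=` V a1 & VS S2 `<=` V a2].

Lemma split_support_generator : split_support G.
Proof.
by exists G, G; split=> [P|P [Pprime _]|P [Pprime _]]; [tauto|exact: V_generator..].
Qed.

Lemma split_support_S1 s : S1 s -> split_support s.
Proof.
move=> S1s; exists s, G; split=> [P|P [Pprime S1P]|P [Pprime _]].
- by split=> [[Pprime nPs]|[]//]; split; [split|apply: V_generator].
- by split=> //; apply: S1P.
- exact: V_generator.
Qed.

Lemma split_support_S2 s : S2 s -> split_support s.
Proof.
move=> S2s; exists G, s; split=> [P|P [Pprime _]|P [Pprime S2P]].
- by split=> [[Pprime nPs]|[]//]; split; [apply: V_generator|split].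
- exact: V_generator.
- by split=> //; apply: S2P.
Qed.

Lemma split_support_sandwich m m' :
  split_support m -> split_support m' -> split_support (tens (tens m G) m').
Proof.
move=> [a1 [a2 [Vm S1a1 S2a2]]] [b1 [b2 [Vm' S1b1 S2b2]]].
exists (tens (tens a1 G) b1), (tens (tens a2 G) b2); split=> P.
- rewrite !(V_sandwich Ggen); have := Vm P; have := Vm' P; tauto.
- by move=> S1P; apply/(V_sandwich Ggen); split; [apply: S1a1|apply: S1b1].
- by move=> S2P; apply/(V_sandwich Ggen); split; [apply: S2a2|apply: S2b2].
Qed.

Lemma exists_split_support_empty :
  (forall P, ~ (VS S1 P /\ VS S2 P)) ->
  exists m, split_support m /\ forall P, ~ V m P.
Proof.
move=> S12.
have [[m splitm gen0m]|nogen] := pselect (exists2 m, split_support m & ideal_gen set0 m).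
  exists m; split=> // P [[Pideal _] nPm]; apply: nPm.
  exact: (ideal_gen_min Pideal (sub0set P)) m gen0m.
have gen0_nosplit x : ideal_gen set0 x -> ~ split_support x.
  by move=> gen0x splitx; apply: nogen; exists x.
have splitG : exists s, split_support s by exists G; apply: split_support_generator.
have split_mul s s' : split_support s -> split_support s' ->
    exists c, split_support (tens (tens s c) s').
  by move=> splits splits'; exists G; apply: split_support_sandwich.
have [P [Pprime _ Psplit]] :=
  exists_prime_avoiding splitG split_mul (thick_ideal_gen set0) gen0_nosplit.
case: (S12 P); split; split=> // s Ss Ps; apply: (Psplit s Ps).
  exact: split_support_S1.
exact: split_support_S2.
Qed.

End SplitSupport.

Lemma VS_eq_V_sandwich (K : MDC) (G A a a' : Obj K) (S S' : Obj K -> Prop) :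
  thick_generator G ->
  (forall P, V A P <-> VS S P \/ VS S' P) ->
  VS S `<=` V a -> VS S' `<=` V a' -> (forall P, ~ (V a P /\ V a' P)) ->
  forall P, VS S P <-> V (tens (tens A G) a) P.
Proof.
move=> Ggen VA Sa S'a' aa' P; rewrite (V_sandwich Ggen) VA.
split=> [SP|[[SP|S'P] aP]]; [by split; [left|apply: Sa]|by []|].
by case: (aa' P); split; [|apply: S'a'].
Qed.

Theorem mainTheorem19 (K : MDC) (G : Obj K) (A : Obj K) (S1 S2 : Obj K -> Prop) :
  thick_generator G ->
  (forall P, V A P <-> (VS S1 P \/ VS S2 P)) ->
  (forall P, ~ (VS S1 P /\ VS S2 P)) ->
  exists A1 A2 : Obj K,
    (forall P, VS S1 P <-> V A1 P) /\ (forall P, VS S2 P <-> V A2 P).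
Proof.
move=> Ggen VA S12.
have [m [[a1 [a2 [Vm S1a1 S2a2]]] Vm0]] := exists_split_support_empty Ggen S12.
have a12 P : ~ (V a1 P /\ V a2 P) by move=> /Vm /Vm0.
exists (tens (tens A G) a1), (tens (tens A G) a2); split.
  exact: VS_eq_V_sandwich Ggen VA S1a1 S2a2 a12.
apply: VS_eq_V_sandwich Ggen _ S2a2 S1a1 _ => P; first by have := VA P; tauto.
by case=> a2P a1P; apply: (a12 P).
Qed.
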